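(* For every $n\ge 1$, the map $\nu:S_n\to\mathcal{D}_n\times\mathcal{D}_n$, $\nu(\sigma)=(\lambda(\sigma),\mu(\sigma))$, is injective when restricted to the set $S_n(1234)$ of permutations of $[n]$ avoiding the pattern $1234$.
   Context: A permutation $\sigma\in S_n$ avoids $1234$ if it has no subsequence $\sigma(i_1)<\sigma(i_2)<\sigma(i_3)<\sigma(i_4)$ with $i_1<i_2<i_3<i_4$. $\mathcal{D}_n$ denotes the set of Dyck paths of semilength $n$ (lattice paths from $(0,0)$ to $(2n,0)$ with steps $U=(1,1)$, $D=(1,-1)$, never going below the $x$-axis). For $\sigma=x_1x_2\cdots x_n$: $x_i$ is a left-to-right (LTR) minimum if $x_i<x_j$ for all $j<i$; $x_i$ is a right-to-left (RTL) maximum if $x_i>x_j$ for all $j>i$. The map $\lambda$: write $\sigma=m_1w_1m_2w_2\cdots m_kw_k$ where $m_1>m_2>\dots>m_k=1$ are the LTR minima of $\sigma$ and $w_i$ are (possibly empty) words, $l_i=|w_i|$; set $m_0=n+1$; then $\lambda(\sigma)=U^{m_0-m_1}D^{l_1+1}U^{m_1-m_2}D^{l_2+1}\cdots U^{m_{k-1}-m_k}D^{l_k+1}$. The map $\mu$: write $\sigma=u_hM_hu_{h-1}M_{h-1}\cdots u_1M_1$ where $M_1<M_2<\dots<M_h=n$ are the RTL maxima of $\sigma$ and $u_i$ are (possibly empty) words; set $M_0=0$; then $\mu(\sigma)=U^{M_1-M_0}D^{|u_1|+1}U^{M_2-M_1}D^{|u_2|+1}\cdots U^{M_h-M_{h-1}}D^{|u_h|+1}$.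 (Equivalently, the ascent code of $\mu(\sigma)$ is $M_1,\dots,M_{h-1}$ and its descent code is $n-P_2,\dots,n-P_h$, where $P_i$ is the position of $M_i$.) *)

From mathcomp Require Import all_boot all_fingroup.
Set Implicit Arguments. Unset Strict Implicit. Unset Printing Implicit Defensive.

(* A lattice path is a seq bool: true = U = (1,1), false = D = (1,-1). *)
Definition U := true.
Definition D := false.

Fixpoint dyck_from (h : nat) (p : seq bool) : bool :=
  match p with
  | [::] => h == 0
  | b :: p' => if b then dyck_from h.+1 p' else (0 < h) && dyck_from h.-1 p'
  end.
Definition is_dyck (n : nat) (p : seq bool) : bool :=
  (size p == 2 * n) && dyck_from 0 p.

(* The one-line notation x_1 ... x_n of sigma in S_n, with values in [n] = {1..n}
   (sigma acts on 'I_n = {0..n-1}, so we shift by one). *)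
Definition word n (s : 'S_n) : seq nat := [seq (s i).+1 | i <- enum 'I_n].

Definition avoids1234 n (s : 'S_n) : bool :=
  ~~ [exists i1 : 'I_n, exists i2 : 'I_n, exists i3 : 'I_n, exists i4 : 'I_n,
        [&& i1 < i2, i2 < i3, i3 < i4,
            s i1 < s i2, s i2 < s i3 & s i3 < s i4]].

(* lambda: scanning left to right with m = current LTR minimum (initially
   m_0 = n+1); a new LTR minimum x contributes U^(m - x) followed by the D of
   its own block, each other letter of w_i contributes one D.  This produces
   U^{m_0-m_1} D^{l_1+1} ... U^{m_{k-1}-m_k} D^{l_k+1}. *)
Fixpoint lambda_aux (m : nat) (w : seq nat) : seq bool :=
  match w with
  | [::] => [::]
  | x :: w' => if x < m then nseq (m - x) U ++ D :: lambda_aux x w'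
               else D :: lambda_aux m w'
  end.
Definition lambda_map n (s : 'S_n) : seq bool := lambda_aux n.+1 (word s).

(* mu: sigma = u_h M_h ... u_1 M_1; reading sigma right to left gives
   M_1 rev(u_1) M_2 rev(u_2) ...; with m = current RTL maximum (M_0 = 0),
   a new RTL maximum x contributes U^(x - m) D, other letters contribute D.
   This produces U^{M_1-M_0} D^{|u_1|+1} ... U^{M_h-M_{h-1}} D^{|u_h|+1}. *)
Fixpoint mu_aux (m : nat) (w : seq nat) : seq bool :=
  match w with
  | [::] => [::]
  | x :: w' => if m < x then nseq (x - m) U ++ D :: mu_aux x w'
               else D :: mu_aux m w'
  end.
Definition mu_map n (s : 'S_n) : seq bool := mu_aux 0 (rev (word s)).

Definition nu_map n (s : 'S_n) : seq bool * seq bool := (lambda_map s, mu_map s).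

(* Both [lambda] and [mu] are injective readings of the running record of a word:
   from [lambda sigma] one recovers which entries of sigma are left-to-right minima
   together with their values, and from [mu sigma] the same for right-to-left maxima.
   In a 1234-avoiding permutation the entries that are neither are decreasing
   (an increasing pair of them, extended by a smaller earlier entry and a larger later
   one, would be a 1234), so they are the complementary values placed in decreasing
   order at the complementary positions: sigma is determined by these data. *)
From mathcomp Require Import all_boot all_fingroup zify.

Set Implicit Arguments. Unset Strict Implicit. Unset Printing Implicit Defensive.

Lemma nseq_U_D_inj a b p p' :
  nseq a U ++ D :: p = nseq b U ++ D :: p' -> a = b /\ p = p'.
Proof. by elim: a b => [|a IH] [|b] //= [] // /IH [-> ->]. Qed.

(* [lambda_aux] and [mu_aux] are instances of [record_path]: [beats x m] says that
   [x] is a new record against the current record [m], which then costs [gap x m]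
   up-steps. *)
Section RecordPaths.

Variables (beats : rel nat) (gap : nat -> nat -> nat).

Fixpoint record_path (m : nat) (w : seq nat) : seq bool :=
  match w with
  | [::] => [::]
  | x :: w' => if beats x m then nseq (gap x m) U ++ D :: record_path x w'
               else D :: record_path m w'
  end.

Fixpoint records (m : nat) (w : seq nat) : seq (option nat) :=
  match w with
  | [::] => [::]
  | x :: w' => if beats x m then Some x :: records x w' else None :: records m w'
  end.

Hypothesis gap_gt0 : forall x m, beats x m -> 0 < gap x m.
Hypothesis gap_inj : forall m x y, beats x m -> beats y m -> gap x m = gap y m -> x = y.

Lemma records_record_path m w v :
  record_path m w = record_path m v -> records m w = records m v.
Proof.
elim: w v m => [|x w IH] [|y v] m /=.
- by [].
- by case: ifP => [/gap_gt0|//]; case: gap.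
- by case: ifP => [/gap_gt0|//]; case: gap.
case: ifP => bx; case: ifP => by_.
- by case/nseq_U_D_inj => /(gap_inj bx by_) <- /IH ->.
- by move: (gap_gt0 bx); case: gap.
- by move: (gap_gt0 by_); case: gap.
- by case=> /IH ->.
Qed.

Hypothesis beats_trans : forall x y m, beats x y -> beats y m -> beats x m.
Hypothesis beats_record : forall x y m, beats x m -> ~~ beats y m -> beats x y.

Lemma nth_records m w i : i < size w ->
  nth None (records m w) i =
  if beats (nth 0 w i) m && all (beats (nth 0 w i)) (take i w)
  then Some (nth 0 w i) else None.
Proof.
elim: w m i => [|x w IH] m [|i] //=; first by rewrite andbT; case: ifP.
move=> lt_i_w; case bx: (beats x m) => /=; rewrite IH //; set y := nth 0 w i.
- by case: (boolP (beats y x)) => [/beats_trans -> //|_]; rewrite !andbF.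
- by case: (boolP (beats y m)) => //= /beats_record ->; rewrite ?bx.
Qed.

End RecordPaths.

Lemma lambda_auxE m w : lambda_aux m w = record_path ltn (fun x m => m - x) m w.
Proof. by elim: w m => //= x w IH m; rewrite !IH. Qed.

Lemma mu_auxE m w : mu_aux m w = record_path (fun x m => m < x) subn m w.
Proof. by elim: w m => //= x w IH m; rewrite !IH. Qed.

Lemma size_word n (s : 'S_n) : size (word s) = n.
Proof. by rewrite size_map size_enum_ord. Qed.

Lemma nth_word n (s : 'S_n) (i : 'I_n) : nth 0 (word s) i = (s i).+1.
Proof. by rewrite (nth_map i) ?size_enum_ord // nth_ord_enum. Qed.

Definition ltr_min n (s : 'S_n) (i : 'I_n) := [forall j : 'I_n, (j < i) ==> (s i < s j)].
Definition rtl_max n (s : 'S_n) (i : 'I_n) := [forall j : 'I_n, (i < j) ==> (s j < s i)].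
Definition extremal n (s : 'S_n) (i : 'I_n) := ltr_min s i || rtl_max s i.

Lemma all_take_wordE n (s : 'S_n) (i : 'I_n) :
  all (ltn (s i).+1) (take i (word s)) = ltr_min s i.
Proof.
apply/(all_nthP 0)/forallP => [lt_i j | lt_i k].
- apply/implyP => lt_ji.
  by have := lt_i j; rewrite size_take size_word ltn_ord nth_take // nth_word; apply.
- rewrite size_take size_word ltn_ord => lt_ki.
  have lt_kn : k < n by apply: ltn_trans lt_ki (ltn_ord i).
  have /implyP := lt_i (Ordinal lt_kn).
  by rewrite nth_take // -[k]/(val (Ordinal lt_kn)) nth_word; apply.
Qed.

Lemma all_drop_wordE n (s : 'S_n) (i : 'I_n) :
  all (fun y => y < (s i).+1) (drop i.+1 (word s)) = rtl_max s i.
Proof.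
apply/(all_nthP 0)/forallP => [lt_i j | lt_i k].
- apply/implyP => lt_ij; have := lt_i (j - i.+1).
  rewrite size_drop size_word nth_drop subnKC // nth_word; apply.
  by have := ltn_ord j; lia.
- rewrite size_drop size_word => lt_k; have lt_kn : i.+1 + k < n by lia.
  have /implyP := lt_i (Ordinal lt_kn).
  by rewrite nth_drop -[i.+1 + k]/(val (Ordinal lt_kn)) nth_word; apply => /=; lia.
Qed.

Lemma nth_records_word n (s : 'S_n) (i : 'I_n) :
  nth None (records ltn n.+1 (word s)) i = if ltr_min s i then Some (s i).+1 else None.
Proof.
rewrite nth_records ?size_word //; try by move=> *; lia.
by rewrite nth_word all_take_wordE; case: ltr_min => //=; rewrite ltnS ltn_ord.
Qed.

Lemma nth_records_rev_word n (s : 'S_n) (i : 'I_n) :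
  nth None (records (fun x m => m < x) 0 (rev (word s))) (n - i.+1) =
  if rtl_max s i then Some (s i).+1 else None.
Proof.
have lt_in := ltn_ord i.
rewrite nth_records ?size_rev ?size_word; try by move=> *; lia.
rewrite nth_rev ?size_word; last by lia.
rewrite take_rev size_word all_rev.
rewrite !subnSK ?subKn ?leq_subr ?subnn //; last exact: ltnW.
by rewrite nth_word all_drop_wordE; case: rtl_max.
Qed.

Lemma some_if_inj (a b : bool) (x y : nat) :
  (if a then Some x else None) = (if b then Some y else None) -> a = b /\ (a -> x = y).
Proof. by case: a; case: b => // [[->]]. Qed.

Lemma lambda_map_ltr_min n (s t : 'S_n) (i : 'I_n) : lambda_map s = lambda_map t ->
  ltr_min s i = ltr_min t i /\ (ltr_min s i -> s i = t i).
Proof.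
rewrite /lambda_map !lambda_auxE => eq_path.
have eq_rec : records ltn n.+1 (word s) = records ltn n.+1 (word t).
  by apply: records_record_path eq_path => *; lia.
have := congr1 (fun l => nth None l i) eq_rec.
by rewrite /= !nth_records_word => /some_if_inj [-> st]; split=> // /st [] /val_inj.
Qed.

Lemma mu_map_rtl_max n (s t : 'S_n) (i : 'I_n) : mu_map s = mu_map t ->
  rtl_max s i = rtl_max t i /\ (rtl_max s i -> s i = t i).
Proof.
rewrite /mu_map !mu_auxE => eq_path.
have eq_rec : records (fun x m => m < x) 0 (rev (word s)) =
              records (fun x m => m < x) 0 (rev (word t)).
  by apply: records_record_path eq_path => *; lia.
have := congr1 (fun l => nth None l (n - i.+1)) eq_rec.
by rewrite /= !nth_records_rev_word => /some_if_inj [-> st]; split=> // /st [] /val_inj.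
Qed.

Lemma not_ltr_minP n (t : 'S_n) (i : 'I_n) :
  ~~ ltr_min t i -> exists2 a : 'I_n, a < i & t a < t i.
Proof.
case/forallPn => a; rewrite negb_imply -leqNgt => /andP [lt_ai].
rewrite leq_eqVlt => /orP [/eqP/val_inj/perm_inj eq_ai | ]; last by exists a.
by move: lt_ai; rewrite eq_ai ltnn.
Qed.

Lemma not_rtl_maxP n (t : 'S_n) (j : 'I_n) :
  ~~ rtl_max t j -> exists2 b : 'I_n, j < b & t j < t b.
Proof.
case/forallPn => b; rewrite negb_imply -leqNgt => /andP [lt_jb].
rewrite leq_eqVlt => /orP [/eqP/val_inj/perm_inj eq_bj | ]; last by exists b.
by move: lt_jb; rewrite eq_bj ltnn.
Qed.

Lemma avoids1234_nonextremal_decreasing n (t : 'S_n) (i j : 'I_n) :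
  avoids1234 t -> i < j -> ~~ ltr_min t i -> ~~ rtl_max t j -> t j < t i.
Proof.
move=> avt lt_ij /not_ltr_minP [a lt_ai lt_tai] /not_rtl_maxP [b lt_jb lt_tjb].
have neq_tji : t j != t i by rewrite (inj_eq perm_inj) -val_eqE gtn_eqF.
rewrite ltn_neqAle val_eqE neq_tji leqNgt.
apply/negP => lt_tij; case/negP: avt.
by apply/existsP; exists a; apply/existsP; exists i; apply/existsP; exists j;
  apply/existsP; exists b; rewrite lt_ai lt_ij lt_jb lt_tai lt_tij lt_tjb.
Qed.

Section ExtremalEntriesDetermine.

Variables (n : nat) (s t : 'S_n).
Hypothesis avt : avoids1234 t.
Hypothesis extremal_st : forall i, extremal s i = extremal t i.
Hypothesis agree_extremal : forall i, extremal s i -> s i = t i.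

(* At the first position [q] where [s] and [t] differ, the value [s q] sits in [t]
   at a later non-extremal position, so it is smaller than [t q]. *)
Lemma first_difference_lt (q : 'I_n) :
  (forall r : 'I_n, r < q -> s r = t r) -> s q != t q -> s q < t q.
Proof.
move=> agree_before neq_q.
have ext_q : ~~ extremal s q by apply: contra neq_q => /agree_extremal ->.
pose r := (t^-1)%g (s q).
have t_r : t r = s q by rewrite permKV.
have neq_rq : r != q by apply: contra_neq neq_q => eq_rq; rewrite -{2}eq_rq t_r.
have ext_r : ~~ extremal t r.
  apply: contra neq_rq; rewrite -extremal_st => /agree_extremal.
  by rewrite t_r => /perm_inj ->.
have lt_qr : q < r.
  case: ltngtP => // [/agree_before | /val_inj eq_qr]; last by rewrite eq_qr eqxx in neq_rq.
  by rewrite t_r => /perm_inj eq_rq; rewrite eq_rq eqxx in neq_rq.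
move: ext_q ext_r; rewrite extremal_st /extremal !negb_or => /andP [ltr_q _] /andP [_ rtl_r].
by rewrite -t_r; apply: avoids1234_nonextremal_decreasing.
Qed.

End ExtremalEntriesDetermine.

Lemma avoids1234_extremal_inj n (s t : 'S_n) :
  avoids1234 s -> avoids1234 t ->
  (forall i, extremal s i = extremal t i) -> (forall i, extremal s i -> s i = t i) ->
  s = t.
Proof.
move=> avs avt extremal_st agree_st.
have extremal_ts i : extremal t i = extremal s i by rewrite extremal_st.
have agree_ts i : extremal t i -> t i = s i by rewrite -extremal_st => /agree_st.
suff agree_below k : forall i : 'I_n, i < k -> s i = t i.
  by apply/permP => i; apply: (agree_below i.+1).
elim: k => // k IH i; rewrite ltnS leq_eqVlt => /orP [/eqP eq_ik | /IH //].
subst k; have [// | neq_st] := eqVneq (s i) (t i).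
have lt_st := first_difference_lt avt extremal_st agree_st IH neq_st.
have lt_ts : t i < s i.
  apply: (first_difference_lt avs extremal_ts agree_ts) => [r /IH -> //|].
  by rewrite eq_sym.
by move: lt_st; rewrite ltnNge ltnW.
Qed.

Theorem mainTheorem1 (n : nat) (hn : 1 <= n) (s t : 'S_n) :
  avoids1234 s -> avoids1234 t -> nu_map s = nu_map t -> s = t.
Proof.
move=> avs avt [eq_lambda eq_mu].
have ltr_st i := lambda_map_ltr_min i eq_lambda.
have rtl_st i := mu_map_rtl_max i eq_mu.
apply: avoids1234_extremal_inj => // i.
- by rewrite /extremal (proj1 (ltr_st i)) (proj1 (rtl_st i)).
- by case/orP => [/(proj2 (ltr_st i)) | /(proj2 (rtl_st i))].
Qed.
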